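(* Let $G$ be a finite, simple, connected, triangle-free cubic graph. If $G$ has a bridge, then for every valid labeling $\Lambda$ of $\mathfrak{L}_2(G)$ there is a reduced clique $\mathbb{X}\in\mathcal{X}$ which is a Type A self-intersection of some cycle in $\Gamma_\Lambda$.
   Context: $\mathcal{L}(H)$ is the line graph of $H$. Let $\mathcal{T}$ be the set of triangles of $\mathcal{L}(\mathcal{L}(G))$ formed by the three edges of a triangle of $\mathcal{L}(G)$. $\mathfrak{L}_2(G)$ has the vertex set of $\mathcal{L}(\mathcal{L}(G))$ and the edges of $\mathcal{L}(\mathcal{L}(G))$ not in any triangle of $\mathcal{T}$. For each edge $e$ of $G$, the reduced clique $\mathbb{X}_e$ is the subgraph of $\mathfrak{L}_2(G)$ on the four edges of $\mathcal{L}(G)$ incident to $e$, with all edges of $\mathfrak{L}_2(G)$ among them; it is a 4-cycle. $\mathcal{X}$ is the set of reduced cliques. A labeling $\Lambda$ gives each edge of $\mathfrak{L}_2(G)$ a label in $\{0,1\}$ ($1$ = open); it is valid if in every reduced clique each vertex is incident to two edges of that clique with different labels. $\Gamma_\Lambda$ is the set of connected components (cycles) of the subgraph formed by open edges. $\mathbb{X}$ is a self-intersection of $\gamma\in\Gamma_\Lambda$ if both open edges of $\mathbb{X}$ lie on $\gamma$. Writing $\mathbb{X}$ as the 4-cycle $(x_1,x_2,x_3,x_4)$ with open edges $x_1x_2,x_3x_4$, deleting them from $\gamma$ leaves two vertex-disjoint paths with endpoints $x_1,\dots,x_4$; the self-intersection is of Type A if these paths connect $x_1$ with $x_3$ and $x_2$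 with $x_4$ (and of Type B if they connect $x_2$ with $x_3$ and $x_4$ with $x_1$). *)

From mathcomp Require Import all_boot.
Set Implicit Arguments. Unset Strict Implicit. Unset Printing Implicit Defensive.

(* A finite simple graph: a finType V with a symmetric irreflexive relation adj.
   Edges are represented as 2-element sets. *)

Section Graphs.
Variable V : finType.
Variable adj : rel V.

Definition connected_graph := forall x y : V, connect adj x y.
Definition cubic := forall x : V, #|[set y | adj x y]| = 3.
Definition triangle_free := forall x y z : V, ~~ [&& adj x y, adj y z & adj x z].

Definition gedges : {set {set V}} := [set s : {set V} | [exists x : V, exists y : V, adj x y && (s == [set x; y])]].

Definition is_bridge (u v : V) :=
  adj u v /\
  ~~ connect (fun x y => adj x y && ([set x; y] != [set u; v])) u v.
Definition has_bridge := exists u v : V, is_bridge u v.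
End Graphs.

(* Line graph edges: for a graph with edge set E (vertex set = E of the line graph),
   the edges of the line graph are pairs of distinct edges sharing an endpoint. *)
Definition line_edges (T : finType) (E : {set {set T}}) : {set {set {set T}}} :=
  [set s : {set {set T}} | [exists e in E, exists f in E,
     [&& e != f, e :&: f != set0 & s == [set e; f]]]].

Section L2.
Variable V : finType.
Variable adj : rel V.

(* edges of L(G) = vertices of L(L(G)) *)
Definition LG_edges : {set {set {set V}}} := line_edges (gedges adj).
Definition LLG_edges : {set {set {set {set V}}}} := line_edges LG_edges.

(* f (an edge of L(L(G))) lies in a triangle of L(L(G)) formed by the three
   edges of a triangle {a,b,c} of L(G) *)
Definition in_T_triangle (f : {set {set {set V}}}) :=
  [exists a : {set V}, exists b : {set V}, exists c : {set V},
     [&& [set a; b] \in LG_edges, [set b; c] \in LG_edges, [set a; c] \in LG_edges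
       & f \subset [set [set a; b]; [set b; c]; [set a; c]]]].

(* edges of frak L_2(G); its vertex set is LG_edges *)
Definition L2_edges : {set {set {set {set V}}}} :=
  [set f in LLG_edges | ~~ in_T_triangle f].

Definition rc_verts (e : {set V}) : {set {set {set V}}} :=
  [set x in LG_edges | e \in x].
Definition rc_edges (e : {set V}) : {set {set {set {set V}}}} :=
  [set f in L2_edges | f \subset rc_verts e].

Variable Lam : {set {set {set V}}} -> bool. (* labeling, 1 = open *)

Definition valid_labeling :=
  forall e, e \in gedges adj -> forall x, x \in rc_verts e ->
  forall f1 f2, f1 \in rc_edges e -> f2 \in rc_edges e ->
    x \in f1 -> x \in f2 -> f1 != f2 -> Lam f1 != Lam f2.

Definition open_adj : rel {set {set V}} :=
  fun x y => ([set x; y] \in L2_edges) && Lam [set x; y].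

(* Gamma_Lambda: vertex sets of the connected components of the open subgraph *)
Definition Gamma : {set {set {set {set V}}}} :=
  [set [set y | connect open_adj x y] | x in LG_edges & [exists y, open_adj x y]].

Definition typeA_selfint (e : {set V}) (gamma : {set {set {set V}}}) :=
  exists x1 x2 x3 x4 : {set {set V}},
    [/\ uniq [:: x1; x2; x3; x4],
        [/\ x1 \in rc_verts e, x2 \in rc_verts e, x3 \in rc_verts e & x4 \in rc_verts e],
        [/\ [set x1; x2] \in rc_edges e, [set x2; x3] \in rc_edges e,
            [set x3; x4] \in rc_edges e & [set x4; x1] \in rc_edges e],
        [/\ Lam [set x1; x2], Lam [set x3; x4], ~~ Lam [set x2; x3] & ~~ Lam [set x4; x1]]
      & ([set x1; x2] \subset gamma) && ([set x3; x4] \subset gamma)] /\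
        let rem := fun x y => [&& open_adj x y, x \in gamma, y \in gamma,
                                  [set x; y] != [set x1; x2] & [set x; y] != [set x3; x4]] in
        connect rem x1 x3 /\ connect rem x2 x4.
End L2.

(* Let uv be a bridge, a, b the other neighbours of u and c, d those of v.  The reduced clique of
   uv is the 4-cycle A C B D on the vertices A = {uv,ua}, B = {uv,ub}, C = {uv,vc}, D = {uv,vd},
   and validity makes its open edges either AC, BD or AD, BC; say AC, BD.  Since every vertex has
   exactly one open edge in each of its two reduced cliques, deleting the open edges of X_uv leaves
   A, B, C, D of degree 1 and every other vertex of degree 2.  By the handshake lemma the
   component of A then contains one of B, C, D.  Along it, the two G-edges of each vertex meet at
   a vertex reachable from u in G - uv, which excludes C and D because uv is a bridge.  Hence A is
   joined to B, and symmetrically C to D, by open paths avoiding X_uv: X_uv is a Type A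
   self-intersection of the cycle through A. *)

From mathcomp Require Import all_boot.
Set Implicit Arguments. Unset Strict Implicit. Unset Printing Implicit Defensive.

Section Pairs.
Variable T : finType.
Implicit Types a b c d : T.

Lemma eq_set2 a b c d :
  [set a; b] = [set c; d] -> (a = c /\ b = d) \/ (a = d /\ b = c).
Proof.
move=> abcd.
have : a \in [set c; d] by rewrite -abcd set21.
have : b \in [set c; d] by rewrite -abcd set22.
have : c \in [set a; b] by rewrite abcd set21.
have : d \in [set a; b] by rewrite abcd set22.
rewrite !inE => /orP[]/eqP ? /orP[]/eqP ? /orP[]/eqP ? /orP[]/eqP ?; subst;
  by [left | right].
Qed.

Lemma set2_injl a b c : [set a; b] = [set a; c] -> b = c.
Proof. by case/eq_set2=> [[_ ->]|[-> ->]]. Qed.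

Lemma eq_set2_of_mem a b c d :
  a != b -> a \in [set c; d] -> b \in [set c; d] -> [set a; b] = [set c; d].
Proof.
move=> ab /set2P[] ? /set2P[] ?; subst; rewrite ?eqxx // in ab *; exact: setUC.
Qed.

Lemma setI_neq0 (A B : {set T}) x : x \in A -> x \in B -> A :&: B != set0.
Proof. by move=> xA xB; apply/set0Pn; exists x; rewrite inE xA. Qed.

End Pairs.

Section LineGraph.
Variables (T : finType) (E : {set {set T}}).

Lemma line_edgesP s :
  reflect (exists e f, [/\ e \in E, f \in E, e != f, e :&: f != set0 & s = [set e; f]])
          (s \in line_edges E).
Proof.
apply: (iffP idP) => [|[e [f [eE fE ef ef0 ->]]]].
  rewrite inE => /existsP[e /andP[eE /existsP[f /andP[fE /and3P[ef ef0 /eqP ->]]]]].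
  by exists e, f.
by rewrite inE; apply/existsP; exists e; rewrite eE; apply/existsP; exists f; rewrite fE ef ef0 /=.
Qed.

Lemma mem_line_edges e f :
  e \in E -> f \in E -> e != f -> e :&: f != set0 -> [set e; f] \in line_edges E.
Proof. by move=> eE fE ef ef0; apply/line_edgesP; exists e, f. Qed.

Lemma line_edges_set2 e f :
  [set e; f] \in line_edges E -> [/\ e \in E, f \in E, e != f & e :&: f != set0].
Proof.
case/line_edgesP=> p [q [pE qE pq pq0 /eq_set2[[-> ->]|[-> ->]]]] //.
by rewrite eq_sym setIC.
Qed.

Lemma line_edges_loop e : [set e; e] \notin line_edges E.
Proof. by apply/negP=> /line_edges_set2[_ _]; rewrite eqxx. Qed.

Lemma line_edges_at s e : s \in line_edges E -> e \in s ->
  exists f, [/\ e \in E, f \in E, f != e, e :&: f != set0 & s = [set e; f]].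
Proof.
case/line_edgesP=> p [q [pE qE pq pq0 ->]] /set2P[]->.
  by exists q; rewrite eq_sym.
by exists p; rewrite setIC setUC.
Qed.

End LineGraph.

Lemma line_edges2_share (T : finType) (E : {set {set T}}) x y f g :
  [set x; y] \in line_edges (line_edges E) -> x = [set f; g] -> f != g ->
  (f \in y) = ~~ (g \in y).
Proof.
move=> /line_edges_set2[_ /line_edgesP[p [q [_ _ _ _ ey]]] xy /set0Pn[k]].
rewrite inE => /andP[kx ky] ex fg.
have f_or_g : (f \in y) || (g \in y).
  by move: kx; rewrite ex => /set2P[] <-; rewrite ky ?orbT.
have not_both : ~~ ((f \in y) && (g \in y)).
  apply/andP=> -[fy gy]; rewrite ey in fy gy.
  by rewrite ex ey (eq_set2_of_mem fg fy gy) eqxx in xy.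
by move: f_or_g not_both; case: (f \in y); case: (g \in y).
Qed.

Section Handshake.
Variables (T : finType) (r : rel T).
Hypotheses (r_sym : symmetric r) (r_irr : irreflexive r).

(* Each edge is counted once with [x] before [y] in the [enum_rank] order and once after. *)
Lemma double_sum_sym_even (S : {pred T}) : ~~ odd (\sum_(x in S) \sum_(y in S) r x y).
Proof.
pose lt x y := r x y && (enum_rank x < enum_rank y).
have r_split x y : r x y = lt x y + lt y x :> nat.
  rewrite /lt [r y x]r_sym; case rxy: (r x y) => //=.
  have : (enum_rank x : nat) != enum_rank y.
    by apply: contraTneq rxy => /val_inj/enum_rank_inj ->; rewrite r_irr.
  by case: ltngtP.
under eq_bigr => x _ do under eq_bigr => y _ do rewrite r_split.
under eq_bigr => x _ do rewrite big_split /=.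
rewrite big_split /=.
by rewrite [X in _ + X]exchange_big addnn odd_double.
Qed.

Lemma connect_odd_degree s : odd #|[set y | r s y]| ->
  exists x, [/\ connect r s x, x != s & odd #|[set y | r x y]|].
Proof.
move=> odd_s; pose S := connect r s.
have deg_in_S x : x \in S -> #|[set y | r x y]| = \sum_(y in S) r x y.
  move=> Sx; rewrite -sum1_card big_mkcond [RHS]big_mkcond /=; apply: eq_bigr => y _.
  rewrite inE; case rxy: (r x y); last by case: (y \in S).
  by rewrite (_ : y \in S) //; apply: connect_trans Sx (connect1 rxy).
have := double_sum_sym_even S.
rewrite -(eq_bigr _ deg_in_S) (bigD1 s (connect0 r s)) /= oddD odd_s /= negbK.
case: (pickP [pred x | [&& connect r s x, x != s & odd #|[set y | r x y]|]]).
  by move=> x /and3P[sx xs odd_x] _; exists x.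
move=> no_odd odd_sum; exfalso; move: odd_sum; apply/negP.
apply: (big_ind (fun n => ~~ odd n)) => [//|m n|x /andP[Sx xs]].
  by rewrite oddD => /negPf-> /negPf->.
by have := no_odd x; rewrite /= Sx xs /= => ->.
Qed.
End Handshake.

Lemma connect_sub_in (T : finType) (P : {pred T}) (e e' : rel T) x y :
  (forall a b, a \in P -> e a b -> (b \in P) && e' a b) ->
  x \in P -> connect e x y -> connect e' x y.
Proof.
move=> step + /connectP[p + ->]; elim: p x => //= z p IH x Px /andP[exz pz].
case/andP: (step x z Px exz) => Pz e'xz.
exact: connect_trans (connect1 e'xz) (IH z Pz pz).
Qed.

Section CubicGraph.
Variables (V : finType) (adj : rel V).
Hypotheses (adj_sym : symmetric adj) (adj_irr : irreflexive adj).

Lemma gedges_adj x y : adj x y -> [set x; y] \in gedges adj.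
Proof.
by move=> axy; rewrite inE; apply/existsP; exists x; apply/existsP; exists y; rewrite axy /=.
Qed.

Lemma gedges_at h w : h \in gedges adj -> w \in h -> exists r, adj w r /\ h = [set w; r].
Proof.
rewrite inE => /existsP[x /existsP[y /andP[axy /eqP ->]]] /set2P[]->; first by exists y.
by exists x; rewrite adj_sym axy setUC.
Qed.

Lemma LG_edges_wedge w z t : adj w z -> adj w t -> z != t ->
  [set [set w; z]; [set w; t]] \in LG_edges adj.
Proof.
move=> awz awt zt; apply: mem_line_edges; rewrite ?gedges_adj //.
  by apply: contra zt => /eqP/set2_injl->.
by apply: (setI_neq0 (x := w)); rewrite set21.
Qed.

Definition adj_off e x y := adj x y && ([set x; y] != e).

Lemma adj_off_sym e : symmetric (adj_off e).
Proof. by move=> x y; rewrite /adj_off adj_sym setUC. Qed.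

Hypothesis adj_cubic : cubic adj.

Lemma cubic_other_nbrs w z : adj w z -> exists s1 s2,
  [/\ adj w s1, adj w s2, s1 != s2, s1 != z & s2 != z] /\
  forall r, adj w r -> [|| r == z, r == s1 | r == s2].
Proof.
move=> awz; have := adj_cubic w; rewrite (cardsD1 z) inE awz add1n.
case=> /eqP/cards2P[s1 [s2 [s12 nbrs]]].
have : s1 \in [set y | adj w y] :\ z by rewrite nbrs set21.
have : s2 \in [set y | adj w y] :\ z by rewrite nbrs set22.
rewrite !inE => /andP[s2z aws2] /andP[s1z aws1].
exists s1, s2; split=> // r awr; case: eqP => //= /eqP rz.
have : r \in [set y | adj w y] :\ z by rewrite !inE rz.
by rewrite nbrs !inE.
Qed.

Lemma in_T_triangle_adjacent f x y g h : in_T_triangle adj f ->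
  x \in f -> y \in f -> g \in x -> h \in y -> g != h -> [set g; h] \in LG_edges adj.
Proof.
case/existsP=> a /existsP[b /existsP[c /and4P[ab bc ac /subsetP sub]]].
have in_abc z k : z \in f -> k \in z -> k \in [set a; b; c].
  by move=> /sub; rewrite !inE => /orP[/orP[]|]/eqP->; rewrite !inE => /orP[]->; rewrite ?orbT.
move=> xf yf gx hy; move: (in_abc _ _ xf gx) (in_abc _ _ yf hy).
by rewrite !(in_setU, in_set1) => /orP[/orP[]|]/eqP-> /orP[/orP[]|]/eqP->;
  rewrite ?eqxx // => _; rewrite // setUC.
Qed.

Lemma in_T_triangle_of_LG f g h :
  [set f; g] \in LG_edges adj -> [set g; h] \in LG_edges adj -> [set f; h] \in LG_edges adj ->
  in_T_triangle adj [set [set f; g]; [set f; h]].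
Proof.
move=> fg gh fh; apply/existsP; exists f; apply/existsP; exists g; apply/existsP; exists h.
by rewrite fg gh fh; apply/subsetP=> k /set2P[]->; rewrite !inE eqxx ?orbT.
Qed.

Hypothesis adj_triangle_free : triangle_free adj.

(* The L(G)-vertices [wt] and [zs] are disjoint, so [wt, wz, zs] is no triangle of L(G). *)
Lemma L2_edges_path w z t s : adj w z -> adj w t -> t != z -> adj z s -> s != w ->
  [set [set [set w; z]; [set w; t]]; [set [set w; z]; [set z; s]]] \in L2_edges adj.
Proof.
move=> awz awt tz azs sw.
have wz : w != z by apply: contraTneq awz => ->; rewrite adj_irr.
have wz_zs : [set w; z] != [set z; s].
  by apply/negP=> /eqP/eq_set2[[/eqP]|[/eqP]]; rewrite ?(negbTE wz) // eq_sym (negbTE sw).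
have wt_zs : [set w; t] :&: [set z; s] = set0.
  apply/setP=> k; rewrite !inE; apply/negP=> /andP[/orP[]/eqP-> /orP[]/eqP e].
  - by rewrite e eqxx in wz.
  - by rewrite e eqxx in sw.
  - by rewrite e eqxx in tz.
  - by rewrite -e in azs; move: (adj_triangle_free w z t); rewrite awz azs awt.
have wt_ne_zs : [set w; t] != [set z; s].
  by apply: contraTneq (setI_neq0 (set21 z s) (set21 z s)) => {1}<-; rewrite wt_zs eqxx.
rewrite inE; apply/andP; split.
  apply: mem_line_edges.
  - by apply: LG_edges_wedge; rewrite // eq_sym.
  - apply: mem_line_edges; rewrite ?gedges_adj //.
    by apply: (setI_neq0 (x := z)); rewrite ?set21 ?set22.
  - by apply: contra wt_ne_zs => /eqP/set2_injl->.
  - by apply: (setI_neq0 (x := [set w; z])); rewrite set21.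
apply/negP=> inT.
have := in_T_triangle_adjacent inT (set21 _ _) (set22 _ _) (set22 _ _) (set22 _ _) wt_ne_zs.
by case/line_edges_set2=> _ _ _; rewrite wt_zs eqxx.
Qed.

Lemma L2_edges_wedge_nbr w z t s1 s2 (y : {set {set V}}) : adj w z -> adj w t -> t != z ->
  (forall r, adj z r -> [|| r == w, r == s1 | r == s2]) ->
  [set w; z] \in y -> [set [set [set w; z]; [set w; t]]; y] \in L2_edges adj ->
  y = [set [set w; z]; [set z; s1]] \/ y = [set [set w; z]; [set z; s2]].
Proof.
move=> awz awt tz nbr_z wzy /setIdP[/line_edges_set2[xL yL xy _] notT].
have [h [_ hG hwz /set0Pn[c /setIP[/set2P[]-> ch]] ey]] := line_edges_at yL wzy;
  have [r [ar eh]] := gedges_at hG ch; rewrite {}ey {}eh in xy notT hwz *.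
- have rz : z != r by apply: contra hwz => /eqP->.
  have [rt|rt] := eqVneq r t; first by rewrite rt eqxx in xy.
  by rewrite in_T_triangle_of_LG ?LG_edges_wedge // eq_sym in notT.
- case/or3P: (nbr_z r ar) => /eqP rE; [by rewrite rE setUC eqxx in hwz|left|right];
    by rewrite rE.
Qed.

Section Labeling.
Variable Lam : {set {set {set V}}} -> bool.
Hypothesis Lam_valid : valid_labeling adj Lam.

Lemma rc_edges_of_L2 e X Y : [set X; Y] \in L2_edges adj -> e \in X -> e \in Y ->
  [set X; Y] \in rc_edges adj e.
Proof.
move=> XY eX eY; have /setIdP[/line_edges_set2[XL YL _ _] _] := XY.
by rewrite inE XY; apply/subsetP=> k /set2P[]->; rewrite inE ?XL ?YL.
Qed.

Lemma rc_edges_set2 e X Y : [set X; Y] \in rc_edges adj e ->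
  [/\ X \in rc_verts adj e, Y \in rc_verts adj e & X != Y].
Proof.
case/setIdP=> /setIdP[/line_edges_set2[_ _ XY _] _] /subsetP sub.
by rewrite !sub ?set21 ?set22.
Qed.

Lemma valid_wedge e X Y Z :
  [set X; Y] \in rc_edges adj e -> [set X; Z] \in rc_edges adj e -> Y != Z ->
  Lam [set X; Y] != Lam [set X; Z].
Proof.
move=> XY XZ YZ; have [XV _ _] := rc_edges_set2 XY.
have /setIdP[XL eX] := XV; have [f [eG _ _ _ _]] := line_edges_at XL eX.
apply: (Lam_valid eG XV XY XZ (set21 _ _) (set21 _ _)).
by apply: contra YZ => /eqP/set2_injl->.
Qed.

Lemma card_open_in_clique x f : x \in LG_edges adj -> f \in x ->
  #|[set y | open_adj adj Lam x y && (f \in y)]| = 1.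
Proof.
move=> xL fx; have [g [fG gG gf /set0Pn[c /setIP[cf cg]] ex]] := line_edges_at xL fx.
have [z [acz ef]] := gedges_at fG cf; have [t [act eg]] := gedges_at gG cg.
rewrite {}ef {}eg in ex gf fx *.
have tz : t != z by apply: contra gf => /eqP->.
have azc : adj z c by rewrite adj_sym.
have [s1 [s2 [[azs1 azs2 s12 s1c s2c] nbr_z]]] := cubic_other_nbrs azc.
set y1 := [set [set c; z]; [set z; s1]]; set y2 := [set [set c; z]; [set z; s2]].
have xy1 : [set x; y1] \in L2_edges adj by rewrite ex; exact: L2_edges_path.
have xy2 : [set x; y2] \in L2_edges adj by rewrite ex; exact: L2_edges_path.
have Lam12 : Lam [set x; y1] != Lam [set x; y2].
  apply: (valid_wedge (e := [set c; z])); rewrite ?rc_edges_of_L2 // ?ex ?set21 //.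
  by apply: contra s12 => /eqP/set2_injl/set2_injl->.
have -> : [set y | open_adj adj Lam x y && ([set c; z] \in y)] =
          [set if Lam [set x; y1] then y1 else y2].
  apply/setP=> y; rewrite !inE /open_adj; apply/idP/eqP => [/andP[/andP[xy Lxy] zy]|->].
    move: xy; rewrite {1}ex => /(L2_edges_wedge_nbr acz act tz nbr_z zy)[] ey;
      rewrite ey in Lxy *; first by rewrite Lxy.
    by case: ifP => // Lxy1; rewrite Lxy1 Lxy in Lam12.
  case: ifP => Lxy1; rewrite ?xy1 ?xy2 ?set21 ?andbT //=.
  by move: Lam12; rewrite Lxy1; case: (Lam _).
by rewrite cards1.
Qed.

Lemma open_adj_share x y f g : open_adj adj Lam x y -> x = [set f; g] -> f != g ->
  (f \in y) = ~~ (g \in y).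
Proof. by case/andP=> /setIdP[xy _] _; apply: (line_edges2_share (E := gedges adj) xy). Qed.

Definition open_outside e x y := open_adj adj Lam x y && ~~ ((e \in x) && (e \in y)).

Lemma odd_open_outside_degree e x :
  odd #|[set y | open_outside e x y]| = (x \in LG_edges adj) && (e \in x).
Proof.
pose N f := [set y | open_adj adj Lam x y && (f \in y)].
have [xL|xNL] /= := boolP (x \in LG_edges adj); last first.
  rewrite (_ : [set y | _] = set0) ?cards0 //; apply/setP=> y; rewrite !inE.
  by apply: contraNF xNL => /andP[/andP[/setIdP[/line_edges_set2[]]]].
have [ex|eNx] := boolP (e \in x).
  have [g [_ _ ge _ exg]] := line_edges_at xL ex.
  have gx : g \in x by rewrite exg set22.
  rewrite (@eq_card _ _ (N g)) ?card_open_in_clique // => y.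
  rewrite !inE /open_outside ex /=; case O: open_adj => //=.
  by rewrite (open_adj_share O exg) ?negbK // eq_sym.
case/line_edgesP: (xL) => f [g [_ _ fg _ exfg]].
have Nfg : N f :&: N g = set0.
  apply/setP=> y; rewrite !inE; case O: open_adj => //=.
  by rewrite (open_adj_share O exfg fg) andNb.
have -> : [set y | open_outside e x y] = N f :|: N g.
  apply/setP=> y; rewrite !inE /open_outside (negbTE eNx) /=.
  by case O: open_adj => //=; rewrite (open_adj_share O exfg fg) orNb.
by rewrite cardsU Nfg cards0 !card_open_in_clique // exfg ?set21 ?set22.
Qed.

Lemma open_outside_sym e : symmetric (open_outside e).
Proof.
by move=> x y; rewrite /open_outside /open_adj [[set y; x]]setUC [(e \in y) && _]andbC.
Qed.

Lemma open_outside_irr e : irreflexive (open_outside e).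
Proof.
move=> x; apply/negP=> /andP[/andP[/setIdP[xx _] _] _].
by rewrite (negbTE (line_edges_loop _ _)) in xx.
Qed.

Definition pivot_reachable e u : pred {set {set V}} :=
  fun y => [exists w, connect (adj_off e) u w && [forall h in y, w \in h]].

(* An open step outside the clique of [e] passes through a G-edge [k != e] of both ends, so the
   new common vertex is joined to the old one by [k] in G - e. *)
Lemma pivot_reachable_closed e u : closed (open_outside e) (pivot_reachable e u).
Proof.
apply: intro_closed; first exact/sym_connect_sym/open_outside_sym.
move=> y z /andP[/andP[/setIdP[/line_edges_set2[_ zL _ /set0Pn[k /setIP[ky kz]]] _] _]].
move=> not_e /existsP[w /andP[uw /forall_inP w_y]].
have ke : k != e by apply: contraNneq not_e => ek; rewrite -ek ky kz.
have [k' [kG _ _ /set0Pn[c /setIP[ck ck']] ez]] := line_edges_at zL kz.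
have [r [awr ek]] := gedges_at kG (w_y k ky).
apply/existsP; exists c; apply/andP; split; last first.
  by apply/forall_inP=> h; rewrite ez => /set2P[]->.
move: ck; rewrite ek => /set2P[]-> //.
by apply: connect_trans uw (connect1 _); rewrite /adj_off awr -ek ke.
Qed.

Lemma bridge_side_connect u v a b e : e = [set u; v] ->
  adj u v -> adj u a -> a != v -> (forall r, adj u r -> [|| r == v, r == a | r == b]) ->
  ~~ connect (adj_off e) u v ->
  connect (open_outside e) [set e; [set u; a]] [set e; [set u; b]].
Proof.
move=> He auv aua av nbr_u bridge; set A := [set e; [set u; a]].
have AL : A \in LG_edges adj by rewrite /A He; apply: LG_edges_wedge; rewrite // eq_sym.
have [|x [Ax xA]] := @connect_odd_degree _ _ (open_outside_sym e) (open_outside_irr e) A.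
  by rewrite odd_open_outside_degree AL set21.
rewrite odd_open_outside_degree => /andP[xL ex].
have A_pivot : A \in pivot_reachable e u.
  apply/existsP; exists u; rewrite connect0.
  by apply/forall_inP=> h /set2P[]->; rewrite ?He set21.
rewrite (closed_connect (@pivot_reachable_closed e u) Ax) in A_pivot.
case/existsP: A_pivot => w /andP[uw /forall_inP w_x].
have [h [_ hG he _ exh]] := line_edges_at xL ex.
have /set2P[wu|wv] : w \in [set u; v] by rewrite -He; apply: w_x; rewrite exh set21.
  have [r [aur ehr]] : exists r, adj u r /\ h = [set u; r].
    by apply: gedges_at hG _; rewrite -wu; apply: w_x; rewrite exh set22.
  case/or3P: (nbr_u r aur) => /eqP rE; rewrite rE in ehr.
  - by rewrite ehr He eqxx in he.
  - by rewrite exh ehr eqxx in xA.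
  - by rewrite exh ehr in Ax.
by rewrite -wv uw in bridge.
Qed.

Lemma typeA_of_clique_paths e A B C D : uniq [:: A; C; B; D] ->
  [set A; C] \in rc_edges adj e -> [set C; B] \in rc_edges adj e ->
  [set B; D] \in rc_edges adj e -> [set D; A] \in rc_edges adj e ->
  Lam [set A; C] -> Lam [set B; D] -> ~~ Lam [set C; B] -> ~~ Lam [set D; A] ->
  connect (open_outside e) A B -> connect (open_outside e) C D ->
  exists gamma, gamma \in Gamma adj Lam /\ typeA_selfint adj Lam e gamma.
Proof.
move=> uq AC CB BD DA lAC lBD lCB lDA AB CD.
have [/setIdP[AL eA] /setIdP[_ eC] _] := rc_edges_set2 AC.
have [/setIdP[_ eB] /setIdP[_ eD] _] := rc_edges_set2 BD.
have oAC : open_adj adj Lam A C by rewrite /open_adj lAC andbT; case/setIdP: AC.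
have oBD : open_adj adj Lam B D by rewrite /open_adj lBD andbT; case/setIdP: BD.
have open_of_outside x y : connect (open_outside e) x y -> connect (open_adj adj Lam) x y.
  by apply: connect_sub => {}x {}y /andP[oxy _]; apply: connect1.
set gamma := [set y | connect (open_adj adj Lam) A y].
have Ag : A \in gamma by rewrite inE connect0.
have Cg : C \in gamma by rewrite inE connect1.
have Bg : B \in gamma by rewrite inE open_of_outside.
have Dg : D \in gamma by rewrite inE (connect_trans (connect1 oAC) (open_of_outside _ _ CD)).
exists gamma; split.
  by apply/imsetP; exists A => //; rewrite inE AL; apply/existsP; exists C.
exists A, C, B, D; split.
  split=> //; first by split; case/rc_edges_set2: AC; case/rc_edges_set2: BD.
  by rewrite !subUset !sub1set Ag Cg Bg Dg.
move=> rem; have rem_step x y : x \in gamma -> open_outside e x y -> (y \in gamma) && rem x y.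
  move=> xg /andP[oxy not_e]; have yg : y \in gamma.
    by move: xg; rewrite !inE => xg; apply: connect_trans xg (connect1 oxy).
  rewrite /rem yg oxy xg /=; apply/andP; split; apply: contraNneq not_e;
    by case/eq_set2=> -[-> ->]; rewrite ?eA ?eB ?eC ?eD.
by split; apply: (connect_sub_in rem_step).
Qed.

Section BridgeClique.
Variables u v a b c d : V.
Hypotheses (auv : adj u v) (aua : adj u a) (aub : adj u b) (avc : adj v c) (avd : adj v d).
Hypotheses (ab : a != b) (av : a != v) (bv : b != v) (cd : c != d) (cu : c != u) (du : d != u).
Hypothesis nbr_u : forall r, adj u r -> [|| r == v, r == a | r == b].
Hypothesis nbr_v : forall r, adj v r -> [|| r == u, r == c | r == d].
Hypothesis bridge : ~~ connect (adj_off [set u; v]) u v.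

Local Notation e := [set u; v].
Local Notation A := [set e; [set u; a]].
Local Notation B := [set e; [set u; b]].
Local Notation C := [set e; [set v; c]].
Local Notation D := [set e; [set v; d]].

Let AC : [set A; C] \in rc_edges adj e.
Proof. by rewrite rc_edges_of_L2 ?L2_edges_path ?set21. Qed.
Let AD : [set A; D] \in rc_edges adj e.
Proof. by rewrite rc_edges_of_L2 ?L2_edges_path ?set21. Qed.
Let BC : [set B; C] \in rc_edges adj e.
Proof. by rewrite rc_edges_of_L2 ?L2_edges_path ?set21. Qed.
Let BD : [set B; D] \in rc_edges adj e.
Proof. by rewrite rc_edges_of_L2 ?L2_edges_path ?set21. Qed.

Let CD : C != D. Proof. by apply: contra cd => /eqP/set2_injl/set2_injl->. Qed.

Lemma clique_open_AC_or_AD : Lam [set A; C] || Lam [set A; D].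
Proof. by have := valid_wedge AC AD CD; case: (Lam _); case: (Lam _). Qed.

Lemma bridge_typeA_of_open : Lam [set A; C] ->
  exists gamma, gamma \in Gamma adj Lam /\ typeA_selfint adj Lam e gamma.
Proof.
move=> lAC.
have lAD : ~~ Lam [set A; D].
  by have := valid_wedge AC AD CD; rewrite lAC; case: (Lam _).
have CA : [set C; A] \in rc_edges adj e by rewrite setUC.
have CB : [set C; B] \in rc_edges adj e by rewrite setUC.
have DA : [set D; A] \in rc_edges adj e by rewrite setUC.
have AB : A != B by apply: contra ab => /eqP/set2_injl/set2_injl->.
have lCB : ~~ Lam [set C; B].
  by have := valid_wedge CA CB AB; rewrite [[set C; A]]setUC lAC; case: (Lam _).
have lBD : Lam [set B; D].
  by have := valid_wedge BC BD CD; rewrite [[set B; C]]setUC (negbTE lCB); case: (Lam _).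
have lDA : ~~ Lam [set D; A] by rewrite setUC.
have [_ _ nAC] := rc_edges_set2 AC; have [_ _ nAD] := rc_edges_set2 AD.
have [_ _ nCB] := rc_edges_set2 CB; have [_ _ nBD] := rc_edges_set2 BD.
apply: (typeA_of_clique_paths (A := A) (B := B) (C := C) (D := D)) => //.
- by rewrite /= !inE !negb_or nAC AB nAD nCB CD nBD.
- exact: (bridge_side_connect (erefl _) auv aua av nbr_u bridge).
have bridge_vu : ~~ connect (adj_off e) v u.
  by rewrite sym_connect_sym //; apply: adj_off_sym.
by apply: (bridge_side_connect (setUC _ _) _ avc cu nbr_v bridge_vu); rewrite adj_sym.
Qed.
End BridgeClique.
End Labeling.
End CubicGraph.

Theorem lemma2p18 (V : finType) (adj : rel V)
  (Hsym : symmetric adj) (Hirr : irreflexive adj)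
  (Hconn : connected_graph adj) (Hcub : cubic adj) (Htf : triangle_free adj)
  (Hbr : has_bridge adj)
  (Lam : {set {set {set V}}} -> bool) (Hvalid : valid_labeling adj Lam) :
  exists e, e \in gedges adj /\
    exists gamma, gamma \in Gamma adj Lam /\ typeA_selfint adj Lam e gamma.
Proof.
case: Hbr => u [v [auv bridge]].
have [a [b [[aua aub ab av bv] nbr_u]]] := cubic_other_nbrs Hcub auv.
have avu : adj v u by rewrite Hsym.
have [c [d [[avc avd cd cu du] nbr_v]]] := cubic_other_nbrs Hcub avu.
exists [set u; v]; split; first exact: gedges_adj.
have typeA := bridge_typeA_of_open Hsym Hirr Hcub Htf Hvalid auv aua aub.
case/orP: (clique_open_AC_or_AD Hirr Htf Hvalid auv aua avc avd av cd cu du) => open_AC.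
  exact: typeA avc avd ab av bv cd cu du nbr_u nbr_v bridge open_AC.
apply: typeA avd avc ab av bv _ du cu nbr_u _ bridge open_AC; first by rewrite eq_sym.
by move=> r /nbr_v; rewrite [(r == c) || _]orbC.
Qed.
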